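(* Let $G$ be a finite, simple, connected graph of order $n$ which contains a cycle. If $\beta(G)=n-g(G)+2$, then $G$ has no cut vertex (i.e., $G$ is $2$-connected).
   Context: For vertices $x,y$ of a connected graph $G$, $d(x,y)$ denotes the length of a shortest $x$–$y$ path. A set $W\subseteq V(G)$ is a resolving set for $G$ if for every two distinct vertices $u,v\in V(G)$ there exists $w\in W$ with $d(u,w)\neq d(v,w)$. The metric dimension $\beta(G)$ is the minimum cardinality of a resolving set. The girth $g(G)$ is the length of a shortest cycle of $G$. A vertex $v$ is a cut vertex if $G\setminus\{v\}$ has at least two connected components. *)

From mathcomp Require Import all_boot.
Set Implicit Arguments. Unset Strict Implicit. Unset Printing Implicit Defensive.

Section Graphs.
Variables (T : finType) (e : rel T).

Definition simple_graph : Prop := symmetric e /\ irreflexive e.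

Definition connected_graph : Prop := forall x y : T, connect e x y.

Definition walk_of_len (k : nat) (x y : T) : bool :=
  [exists p : k.-tuple T, path e x p && (last x p == y)].

(* In a graph on n vertices a shortest path has < n edges; if y is not
   reachable from x the value defaults to n (irrelevant for connected graphs). *)
Definition dist (x y : T) : nat :=
  \big[minn/#|T|]_(k < #|T| | walk_of_len k x y) k.

Definition resolving (W : {set T}) : bool :=
  [forall u : T, forall v : T,
     (u != v) ==> [exists w in W, dist u w != dist v w]].

Definition metric_dim : nat :=
  \big[minn/#|T|]_(W : {set T} | resolving W) #|W|.

Definition cycle_of_len (k : nat) : bool :=
  [exists c : k.-tuple T, [&& 3 <= k, uniq c & cycle e c]].

Definition has_cycle : Prop := exists k, cycle_of_len k.

Definition girth : nat :=
  \big[minn/#|T|.+1]_(k < #|T|.+1 | cycle_of_len k) k.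

Definition cut_vertex (v : T) : Prop :=
  exists x y : T, [/\ x != v, y != v &
    ~~ connect [rel a b | [&& e a b, a != v & b != v]] x y].

End Graphs.

From mathcomp Require Import all_boot all_order zify.
Import Order.TTheory.
Set Implicit Arguments. Unset Strict Implicit. Unset Printing Implicit Defensive.

(* Let C be a shortest cycle, of length g. Minimality makes C geodesic: the
   distance between two vertices of C is their distance along C. If v is a cut
   vertex, some neighbour x of v lies in a component of G - v avoiding C - v, so
   d(x, w) > d(v, w) for every vertex w <> v of C. For an edge ab of C, let W be
   the set of all vertices except x and the vertices of C other than a and b;
   |W| = n - g + 1. Two vertices of C are told apart by a or b. If v lies on C,
   choose b opposite to v on C: it is farther from x than from any vertex of C.
   If v is off C, choose a adjacent to v when possible: then v, a or b tells x
   apart from any vertex y of C, for otherwise y would be adjacent to v and at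
   distance 2 from a on C, closing a 4-cycle. So W resolves G and
   beta(G) <= n - g + 1. *)

Lemma bigminn_le_cond (I : finType) (P : pred I) (F : I -> nat) d i :
  P i -> \big[minn/d]_(j | P j) F j <= F i.
Proof. exact: (@bigmin_le_cond _ nat). Qed.

Lemma eq_bigminn (I : finType) (P : pred I) (F : I -> nat) d i :
  P i -> (forall j, P j -> F j <= d) ->
  exists2 j, P j & \big[minn/d]_(j | P j) F j = F j.
Proof. by move=> Pi Fd; have [j Pj ->] := @eq_bigmin _ nat I d i P F Pi Fd; exists j. Qed.

Lemma uniq_size_lt_card (T : finType) (x : T) p : uniq (x :: p) -> size p < #|T|.
Proof. by move/card_uniqP=> /= <-; apply: max_card. Qed.

Section Distance.
Variables (T : finType) (e : rel T).
Hypotheses (e_sym : symmetric e) (e_conn : connected_graph e).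

Lemma walk_of_lenP k x y :
  reflect (exists p, [/\ size p = k, path e x p & last x p = y]) (walk_of_len e k x y).
Proof.
apply: (iffP existsP) => [[p /andP [ep /eqP <-]] | [p [sz_p ep <-]]].
  by exists (val p); rewrite size_tuple.
have sz_p' : size p == k by rewrite sz_p.
by exists (Tuple sz_p'); rewrite /= ep eqxx.
Qed.

Lemma shorten_uniq_path x p : path e x p ->
  exists2 q, [/\ path e x q, uniq (x :: q) & last x q = last x p] & size q <= size p.
Proof.
case/shortenP=> q eq uq /= sq; exists q => //.
by apply: uniq_leq_size => //; case/andP: uq.
Qed.

Lemma dist_le_size x p : path e x p -> dist e x (last x p) <= size p.
Proof.
move=> /shorten_uniq_path [q [eq uq lq] /(leq_trans _)]; apply.
have Wq : walk_of_len e (Ordinal (uniq_size_lt_card uq)) x (last x p).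
  by apply/walk_of_lenP; exists q.
exact: (@bigminn_le_cond _ (fun k : 'I_#|T| => walk_of_len e k x (last x p)) val _ _ Wq).
Qed.

Lemma shortest_path x y :
  exists p, [/\ path e x p, last x p = y, uniq (x :: p) & size p = dist e x y].
Proof.
have [p0 ep0 ->] := connectP (e_conn x y).
have [p1 [ep1 up1 lp1] _] := shorten_uniq_path ep0.
have Wp1 : walk_of_len e (Ordinal (uniq_size_lt_card up1)) x (last x p0).
  by apply/walk_of_lenP; exists p1.
have [k /walk_of_lenP [p [sz_p ep lp]] dist_k] :=
  @eq_bigminn _ (fun k : 'I_#|T| => walk_of_len e k x (last x p0)) val #|T| _ Wp1
    (fun k _ => ltnW (ltn_ord k)).
have [q [eq uq lq] sq] := shorten_uniq_path ep.
exists q; split; rewrite ?lq //; apply/eqP; rewrite eqn_leq; apply/andP; split.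
  by rewrite /dist dist_k /= -sz_p.
by rewrite -lp -lq dist_le_size.
Qed.

Lemma dist_eq0 x y : (dist e x y == 0) = (x == y).
Proof.
apply/eqP/eqP => [|<-]; last by apply/eqP; rewrite -leqn0 (@dist_le_size x [::]).
by have [p [_ lp _ <-]] := shortest_path x y; case: p lp.
Qed.

Lemma dist_xx x : dist e x x = 0.
Proof. by apply/eqP; rewrite dist_eq0. Qed.

Lemma dist_edge x y : e x y -> dist e x y <= 1.
Proof. by move=> exy; apply: (@dist_le_size x [:: y]); rewrite /= exy. Qed.

Lemma dist_eq1 x y : irreflexive e -> (dist e x y == 1) = e x y.
Proof.
move=> e_irr; apply/eqP/idP => [d1|exy]; last first.
  apply/eqP; rewrite eqn_leq dist_edge // lt0n dist_eq0.
  by apply: contraTneq exy => ->; rewrite e_irr.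
have [[|z [|? ?]] [//= ep lp _ sp]] := shortest_path x y; rewrite d1 in sp => //.
by move: ep lp => /= /andP [exz _] <-.
Qed.

Lemma dist_triangle x y z : dist e x z <= dist e x y + dist e y z.
Proof.
have [p [ep lp _ <-]] := shortest_path x y.
have [q [eq lq _ <-]] := shortest_path y z.
rewrite -size_cat -{1}lq -lp -last_cat dist_le_size //.
by rewrite cat_path ep lp eq.
Qed.

Lemma path_rcons_rev x p y : path e x (rcons p y) -> path e y (rcons (rev p) x).
Proof.
move=> pxy; rewrite -rev_cons -(belast_rcons x p y) -{1}(last_rcons x p y) rev_path.
by apply: (sub_path _ pxy) => u w; rewrite /= e_sym.
Qed.

Lemma dist_sym x y : dist e x y = dist e y x.
Proof.
wlog suff: x y / dist e x y <= dist e y x.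
  by move=> le_d; apply/eqP; rewrite eqn_leq !le_d.
have [p [ep lp _ <-]] := shortest_path y x.
case/lastP: p ep lp => [_ /= ->|p z]; first by rewrite (@dist_le_size x [::]).
rewrite last_rcons => /path_rcons_rev ep <-.
by rewrite size_rcons -size_rev -(size_rcons (rev p) y) -{1}(last_rcons z (rev p) y) dist_le_size.
Qed.

End Distance.

(* Positions on a cycle of length g: [(i - j) + (j - i)] is |i - j| (truncated
   subtraction), and [cycle_steps g i j] counts the forward steps from i to j. *)
Definition cycle_dist (g i j : nat) := minn ((i - j) + (j - i)) (g - ((i - j) + (j - i))).

Definition cycle_steps (g i j : nat) := if i <= j then j - i else j + g - i.

Section CycleArith.
Variable g : nat.

Lemma cycle_dist_sym i j : cycle_dist g i j = cycle_dist g j i.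
Proof. rewrite /cycle_dist; lia. Qed.

Lemma cycle_dist_double i j : cycle_dist g i j + cycle_dist g i j <= g.
Proof. rewrite /cycle_dist; lia. Qed.

Lemma cycle_dist_triangle i j k : i < g -> j < g -> k < g ->
  cycle_dist g i k <= cycle_dist g i j + cycle_dist g j k.
Proof. rewrite /cycle_dist; lia. Qed.

Lemma cycle_dist_steps i j : i < g -> j < g ->
  cycle_dist g i j = minn (cycle_steps g i j) (cycle_steps g j i).
Proof.
by move=> ? ?; rewrite /cycle_dist /cycle_steps; case: (leqP i j) => ?; case: (leqP j i) => ?; lia.
Qed.

Lemma cycle_steps_lt i j : i < g -> j < g -> cycle_steps g i j < g.
Proof. by move=> ? ?; rewrite /cycle_steps; case: (leqP i j) => ?; lia. Qed.

Lemma cycle_steps_modn i j : i < g -> j < g -> (i + cycle_steps g i j) %% g = j.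
Proof.
move=> ltig ltjg; rewrite /cycle_steps; case: (leqP i j) => [leij|ltji].
  by rewrite subnKC ?modn_small.
by rewrite addnBA ?addKn ?modnDr ?modn_small //; lia.
Qed.

Lemma cycle_dist_adjacent_inj i j m : i < g -> j < g -> m.+1 < g ->
  cycle_dist g i m = cycle_dist g j m -> cycle_dist g i m.+1 = cycle_dist g j m.+1 ->
  i = j.
Proof. rewrite /cycle_dist; lia. Qed.

Lemma cycle_dist_le_antipodal i : i < g -> cycle_dist g i g./2 <= cycle_dist g 0 g./2.
Proof.
have := odd_double_half g; rewrite -addnn /cycle_dist.
by case: (odd g) => /=; lia.
Qed.

Lemma cycle_dist_eq2 i : i < g -> cycle_dist g i 0 = 2 -> 2 <= cycle_dist g i 1 ->
  i = g - 2 /\ 5 <= g.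
Proof. rewrite /cycle_dist; lia. Qed.

End CycleArith.

Lemma cycle_of_len_size (T : finType) (e : rel T) (s : seq T) :
  3 <= size s -> uniq s -> cycle e s -> cycle_of_len e (size s).
Proof. by move=> ge3 us cs; apply/existsP; exists (in_tuple s); apply/and3P. Qed.

Lemma cycle_of_len_le_card (T : finType) (e : rel T) k : cycle_of_len e k -> k <= #|T|.
Proof. by case/existsP => s /and3P [_ us _]; rewrite -(size_tuple s) -(card_uniqP us) max_card. Qed.

Lemma girth_le (T : finType) (e : rel T) k : cycle_of_len e k -> girth e <= k.
Proof.
move=> ck; have lt_k : k < #|T|.+1 by rewrite ltnS (cycle_of_len_le_card ck).
exact: (@bigminn_le_cond _ (fun i : 'I_#|T|.+1 => cycle_of_len e i) val _ (Ordinal lt_k)).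
Qed.

Lemma girth_cycle (T : finType) (e : rel T) : has_cycle e ->
  exists c : seq T, [/\ uniq c, cycle e c, 2 < size c & size c = girth e].
Proof.
move=> [k ck]; have lt_k : k < #|T|.+1 by rewrite ltnS (cycle_of_len_le_card ck).
have [j /existsP [s /and3P [ge3 us cs]] girth_j] :=
  @eq_bigminn _ (fun i : 'I_#|T|.+1 => cycle_of_len e i) val _ (Ordinal lt_k) ck
    (fun i _ => ltnW (ltn_ord i)).
by exists s; rewrite size_tuple /girth girth_j.
Qed.

Section GirthCycle.
Variables (T : finType) (e : rel T).
Hypotheses (e_sym : symmetric e) (e_conn : connected_graph e).
Variables (x0 : T) (c : seq T).
Hypotheses (c_uniq : uniq c) (c_cycle : cycle e c) (c_gt0 : 0 < size c).
Hypothesis c_min : forall k, cycle_of_len e k -> size c <= k.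
Local Notation g := (size c).

(* Positions are read modulo g, so that arcs may wrap around. *)
Let cyc n := nth x0 c (n %% g).

Lemma cyc_edge n : e (cyc n) (cyc n.+1).
Proof.
have lt_ng := ltn_pmod n c_gt0.
move: c_cycle; rewrite (cycle_path x0) => /(pathP x0) c_path.
rewrite /cyc -addn1 -modnDml addn1.
case: (ltngtP (n %% g).+1 g) => [lt_Sng|gt_Sng|eq_Sng].
- by rewrite (modn_small lt_Sng); apply: c_path lt_Sng.
- by rewrite ltnS leqNgt lt_ng in gt_Sng.
have -> : n %% g = g.-1 by rewrite -[in RHS]eq_Sng.
by rewrite prednK // modnn nth_last; apply: c_path 0 c_gt0.
Qed.

Definition arc a L := [seq cyc i | i <- iota a.+1 L].

Lemma arc_path a L : path e (cyc a) (arc a L).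
Proof. by elim: L a => //= L IHL a; rewrite cyc_edge IHL. Qed.

Lemma last_arc a L : last (cyc a) (arc a L) = cyc (a + L).
Proof. by elim: L a => [|L IHL] a; rewrite ?addn0 //= IHL addSnnS. Qed.

Lemma arc_uniq a L : L < g -> uniq (cyc a :: arc a L).
Proof.
move=> lt_Lg; rewrite -[_ :: _]/(map cyc (iota a L.+1)) -[a]addn0 iotaDl -map_comp.
rewrite map_inj_in_uniq ?iota_uniq // => i j; rewrite !mem_iota /= => lt_iL lt_jL.
rewrite /cyc => /eqP; rewrite nth_uniq ?ltn_pmod // eqn_modDl => /eqP.
by rewrite !modn_small //; apply: leq_trans lt_Lg.
Qed.

Lemma girth_le_arc_closure a L I : L < g -> uniq I -> {in I, forall y, y \notin c} ->
  path e (cyc (a + L)) (rcons I (cyc a)) -> 3 <= L.+1 + size I -> g <= L.+1 + size I.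
Proof.
move=> lt_Lg uI offI pI ge3.
have arc_sub : {subset cyc a :: arc a L <= c}.
  move=> y; rewrite -[_ :: _]/(map cyc (iota a L.+1)) => /mapP [i _ ->].
  by rewrite mem_nth ?ltn_pmod.
have -> : L.+1 + size I = size ((cyc a :: arc a L) ++ I) by rewrite size_cat /= size_map size_iota.
apply/c_min/cycle_of_len_size; first by rewrite size_cat /= size_map size_iota.
  rewrite cat_uniq arc_uniq // uI andbT; apply/hasPn => y /offI.
  by apply: contra => /arc_sub.
by rewrite /cycle /= rcons_cat cat_path arc_path last_arc.
Qed.

(* Otherwise the detour and the shorter arc would close a cycle shorter than g. *)
Lemma cycle_dist_le_detour q r I : q < g -> r < g -> uniq I -> {in I, forall y, y \notin c} ->
  path e (nth x0 c q) (rcons I (nth x0 c r)) -> cycle_dist g q r <= (size I).+1.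
Proof.
wlog le_rq : q r I / cycle_steps g r q <= cycle_steps g q r.
  move=> wlog_le lt_qg lt_rg uI offI pI.
  case: (leqP (cycle_steps g r q) (cycle_steps g q r)) => [|/ltnW] le_steps; first exact: wlog_le.
  rewrite (cycle_dist_sym g q r) -(size_rev I); apply: wlog_le; rewrite ?rev_uniq //.
    by move=> y; rewrite mem_rev; apply: offI.
  exact: (path_rcons_rev e_sym pI).
move=> lt_qg lt_rg uI offI pI; rewrite leqNgt; apply/negP => lt_detour.
have := cycle_dist_double g q r.
rewrite cycle_dist_steps // (minn_idPr le_rq) in lt_detour *.
have := @girth_le_arc_closure r (cycle_steps g r q) I (cycle_steps_lt lt_rg lt_qg) uI offI.
rewrite /cyc cycle_steps_modn // !modn_small // => /(_ pI); lia.
Qed.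

(* Cut P at its first return to the cycle and induct on the remainder. *)
Lemma cycle_dist_le_path q r P : q < g -> r < g -> path e (nth x0 c q) P ->
  last (nth x0 c q) P = nth x0 c r -> uniq (nth x0 c q :: P) -> cycle_dist g q r <= size P.
Proof.
move=> + lt_rg; have [n] := ubnP (size P); elim: n q P => // n IHn q P lt_Pn lt_qg pP lP uP.
have [P0|P_ne] := eqVneq P [::].
  move: lP; rewrite P0 /= => /eqP; rewrite nth_uniq // => /eqP ->.
  by rewrite /cycle_dist; lia.
have has_c : has (mem c) P.
  apply/hasP; exists (last (nth x0 c q) P); last by rewrite /= lP mem_nth.
  by case: P P_ne {lt_Pn pP lP uP} => // z P _ /=; exact: mem_last.
case: (split_find has_c) lt_Pn pP lP uP => y I Q cy /hasPn offI.
rewrite size_cat size_rcons cat_path last_rcons last_cat last_rcons => lt_Pn /andP [pI pQ] lQ.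
move=> /= /andP [_]; rewrite cat_rcons cat_uniq => /and3P [uI _ uQ].
have [lt_yg def_y] : index y c < g /\ nth x0 c (index y c) = y by rewrite index_mem nth_index.
have := cycle_dist_triangle lt_qg lt_yg lt_rg.
have := cycle_dist_le_detour lt_qg lt_yg uI offI; rewrite def_y => /(_ pI).
have lt_Qn : size Q < n by move: lt_Pn; rewrite addSn ltnS; apply: leq_ltn_trans; rewrite leq_addl.
have := IHn (index y c) Q lt_Qn lt_yg; rewrite def_y => /(_ pQ lQ uQ).
by move=> le_yr le_qy /leq_trans; apply; apply: leq_add.
Qed.

Lemma dist_girth_cycle i j : i < g -> j < g ->
  dist e (nth x0 c i) (nth x0 c j) = cycle_dist g i j.
Proof.
move=> lt_ig lt_jg; apply/eqP; rewrite eqn_leq; apply/andP; split; last first.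
  have [P [pP lP uP <-]] := shortest_path e_conn (nth x0 c i) (nth x0 c j).
  exact: cycle_dist_le_path.
have dist_arc k l : k < g -> l < g -> dist e (nth x0 c k) (nth x0 c l) <= cycle_steps g k l.
  move=> lt_kg lt_lg; have := dist_le_size (arc_path k (cycle_steps g k l)).
  by rewrite last_arc /cyc cycle_steps_modn // modn_small // size_map size_iota.
by rewrite cycle_dist_steps // leq_min dist_arc // (dist_sym e_sym e_conn) dist_arc.
Qed.

End GirthCycle.

Definition delete_vertex (T : finType) (e : rel T) (v : T) : rel T :=
  [rel a b | [&& e a b, a != v & b != v]].

Section DeleteVertex.
Variables (T : finType) (e : rel T) (v : T).
Hypotheses (e_sym : symmetric e) (e_conn : connected_graph e).

Lemma delete_vertex_connect_sym : connect_sym (delete_vertex e v).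
Proof. by apply: sym_connect_sym => a b; rewrite /delete_vertex /= e_sym [(a != v) && _]andbC. Qed.

Lemma path_delete_vertex x p : path e x p -> v \notin x :: p -> path (delete_vertex e v) x p.
Proof.
elim: p x => //= y p IHp x /andP [exy pyp]; rewrite !inE !negb_or => /and3P [xv yv pv].
rewrite IHp ?inE ?negb_or ?yv // andbT.
by rewrite /delete_vertex /= exy eq_sym xv eq_sym yv.
Qed.

Lemma dist_lt_separated x w : x != v -> ~~ connect (delete_vertex e v) x w ->
  (dist e v w).+1 <= dist e x w.
Proof.
move=> xv not_xw; have [q [pq lq _ <-]] := shortest_path e_conn x w.
have vq : v \in q.
  apply: contraNT not_xw => vq; rewrite -lq.
  have v_notin : v \notin x :: q by rewrite inE negb_or eq_sym xv.
  by apply: (path_connect (path_delete_vertex pq v_notin)); apply: mem_last.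
case/splitPr: vq pq lq => q1 q2; rewrite cat_path last_cat /= => /and3P [_ _ pq2] lq2.
by rewrite size_cat /= addnS ltnS (leq_trans _ (leq_addl _ _)) // -lq2 dist_le_size.
Qed.

Lemma cut_vertex_separated_neighbour s : cut_vertex e v -> s != v ->
  exists x, [/\ e x v, x != v & ~~ connect (delete_vertex e v) x s].
Proof.
move=> [x1 [y1 [x1v y1v not_x1y1]]] sv.
have [z [zv not_zs]] : exists z, z != v /\ ~~ connect (delete_vertex e v) z s.
  case x1s : (connect (delete_vertex e v) x1 s); last by exists x1; rewrite x1s.
  exists y1; split => //; apply: (contra _ not_x1y1) => y1s.
  by rewrite (connect_trans x1s) // delete_vertex_connect_sym.
have [q [pq lq uq _]] := shortest_path e_conn z v.
case/lastP: q pq lq uq => [_ /= zv'|q x]; first by rewrite zv' eqxx in zv.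
rewrite last_rcons rcons_path -rcons_cons rcons_uniq => /andP [pq exv] xv_eq /andP [vq _]; subst x.
have xv : last z q != v by apply: contraNneq vq => <-; apply: mem_last.
exists (last z q); split => //; apply: (contra _ not_zs) => xs.
exact: connect_trans (path_connect (path_delete_vertex pq vq) (mem_last z q)) xs.
Qed.

End DeleteVertex.

Lemma resolving_setC (T : finType) (e : rel T) (U : {set T}) : connected_graph e ->
  {in U &, forall u w, u != w -> exists2 z, z \notin U & dist e u z != dist e w z} ->
  resolving e (~: U).
Proof.
move=> e_conn resU; apply/forallP => u; apply/forallP => w; apply/implyP => uw.
have neq0 p q : p != q -> 0 != dist e q p by move=> pq; rewrite eq_sym (dist_eq0 e_conn) eq_sym.
case uU : (u \in U); last by apply/existsP; exists u; rewrite inE uU dist_xx // neq0.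
case wU : (w \in U).
  by have [z zU duw] := resU u w uU wU uw; apply/existsP; exists z; rewrite inE zU.
by apply/existsP; exists w; rewrite inE wU dist_xx // eq_sym neq0 // eq_sym.
Qed.

Lemma metric_dim_le (T : finType) (e : rel T) (W : {set T}) :
  resolving e W -> metric_dim e <= #|W|.
Proof. exact: (@bigminn_le_cond _ (resolving e) (fun W => #|W|)). Qed.

Lemma cardsC_setU1D2 (T : finType) (A : {set T}) x a b :
  x \notin A -> a \in A -> b \in A -> a != b -> #|~: (x |: (A :\ a :\ b))| = #|T| - #|A| + 1.
Proof.
move=> xA aA bA ab; have := cardsC (x |: (A :\ a :\ b)).
rewrite cardsU1 !inE (negbTE xA) !andbF /=.
have := cardsD1 a A; have := cardsD1 b (A :\ a); rewrite !inE aA bA eq_sym ab /=.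
have := max_card (mem (x |: A)); rewrite cardsU1 xA /=; lia.
Qed.

Section CycleResolving.
Variables (T : finType) (e : rel T).
Hypotheses (e_sym : symmetric e) (e_conn : connected_graph e).
Variables (x0 : T) (c : seq T).
Hypotheses (c_uniq : uniq c) (c_cycle : cycle e c) (c_ge3 : 2 < size c).
Hypothesis c_min : forall k, cycle_of_len e k -> size c <= k.
Local Notation g := (size c).

Let c_gt0 : 0 < g := ltnW (ltnW c_ge3).
Let dist_c := dist_girth_cycle e_sym e_conn x0 c_uniq c_cycle c_gt0 c_min.

Lemma cycle_resolved_by_edge m u w : m.+1 < g -> u \in c -> w \in c -> u != w ->
  (dist e u (nth x0 c m) != dist e w (nth x0 c m)) ||
  (dist e u (nth x0 c m.+1) != dist e w (nth x0 c m.+1)).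
Proof.
move=> lt_mg uc wc; rewrite -(nth_index x0 uc) -(nth_index x0 wc) nth_uniq ?index_mem //.
rewrite !dist_c ?index_mem ?(ltnW lt_mg) //; apply: contraR => /norP [/negPn/eqP dm /negPn/eqP dSm].
by rewrite (cycle_dist_adjacent_inj _ _ lt_mg dm dSm) ?index_mem.
Qed.

Lemma nth_neq_notin x i : x \notin c -> i < g -> nth x0 c i != x.
Proof. by move=> xc lt_ig; apply: contraNneq xc => <-; rewrite mem_nth. Qed.

Definition cut_resolver x a b : {set T} := ~: (x |: ([set y in c] :\ a :\ b)).

Lemma in_cut_resolver x a b z :
  (z \in cut_resolver x a b) = (z != x) && [|| z == a, z == b | z \notin c].
Proof. by rewrite !inE negb_or !negb_and !negbK orbCA orbA. Qed.

Lemma card_cut_resolver x m : x \notin c -> m.+1 < g ->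
  #|cut_resolver x (nth x0 c m) (nth x0 c m.+1)| = #|T| - g + 1.
Proof.
move=> xc lt_mg; rewrite cardsC_setU1D2 ?inE ?mem_nth ?nth_uniq ?(ltnW lt_mg) //.
  by rewrite cardsE (card_uniqP c_uniq).
by rewrite neq_ltn ltnSn.
Qed.

Lemma cut_resolver_resolving x m : x \notin c -> m.+1 < g ->
  (forall y, y \in c -> y != nth x0 c m -> y != nth x0 c m.+1 ->
     exists2 z, z \in cut_resolver x (nth x0 c m) (nth x0 c m.+1) & dist e x z != dist e y z) ->
  resolving e (cut_resolver x (nth x0 c m) (nth x0 c m.+1)).
Proof.
move=> xc lt_mg res_x; apply: resolving_setC => // u w.
rewrite !inE => /predU1P [-> | /andP [ub /andP [ua uc]]]
                /predU1P [-> | /andP [wb /andP [wa wc]]] uw.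
- by rewrite eqxx in uw.
- by have [z zR dz] := res_x w wc wa wb; exists z; rewrite // -in_setC.
- by have [z zR dz] := res_x u uc ua ub; exists z; [rewrite -in_setC | rewrite eq_sym].
case/orP: (cycle_resolved_by_edge lt_mg uc wc uw) => d.
  by exists (nth x0 c m); rewrite // -in_setC in_cut_resolver nth_neq_notin ?eqxx ?(ltnW lt_mg).
by exists (nth x0 c m.+1); rewrite // -in_setC in_cut_resolver nth_neq_notin ?eqxx ?orbT.
Qed.

(* The witness is the vertex of the cycle opposite to c_0. *)
Lemma cut_resolving_on_cycle x : x \notin c ->
  {in c, forall w, w != nth x0 c 0 -> (dist e (nth x0 c 0) w).+1 <= dist e x w} ->
  exists2 W : {set T}, resolving e W & #|W| = #|T| - g + 1.
Proof.
move=> xc far_x; set k := g./2.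
have [lt0k ltkg] : 0 < k /\ k < g by rewrite /k; split; lia.
have Sm : k.-1.+1 = k := prednK lt0k.
have lt_mg : k.-1.+1 < g by rewrite Sm.
exists (cut_resolver x (nth x0 c k.-1) (nth x0 c k.-1.+1)); last exact: card_cut_resolver.
apply: cut_resolver_resolving => // y yc _ _; rewrite Sm.
exists (nth x0 c k); first by rewrite in_cut_resolver nth_neq_notin ?eqxx ?orbT.
have k_ne0 : nth x0 c k != nth x0 c 0 by rewrite nth_uniq // -lt0n.
have := far_x _ (mem_nth x0 ltkg) k_ne0; rewrite -(nth_index x0 yc) !dist_c ?index_mem //.
apply: contraTneq => ->; rewrite -ltnNge ltnS.
by apply: cycle_dist_le_antipodal; rewrite index_mem.
Qed.

Lemma girth_le4_of_off_cycle_neighbour v : v \notin c ->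
  e v (nth x0 c 0) -> e v (nth x0 c (g - 2)) -> g <= 4.
Proof.
move=> vc ev0 evy; set s := [:: nth x0 c 0; v; nth x0 c (g - 2); nth x0 c (g - 1)].
have [lt_g2 lt_g1] : g - 2 < g /\ g - 1 < g by split; lia.
have edge i : i < g -> e (nth x0 c i) (nth x0 c (i.+1 %% g)).
  by move=> lt_ig; have := cyc_edge x0 c_cycle c_gt0 i; rewrite modn_small.
apply: (c_min (k := size s)); apply: cycle_of_len_size => //.
  rewrite /s /= !inE !negb_or !(eq_sym v) !(nth_neq_notin vc) ?nth_uniq ?andbT //; lia.
have e_g2 : e (nth x0 c (g - 2)) (nth x0 c (g - 1)).
  by have := edge _ lt_g2; rewrite (_ : (g - 2).+1 = g - 1) ?modn_small //; lia.
have e_g1 : e (nth x0 c (g - 1)) (nth x0 c 0).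
  by have := edge _ lt_g1; rewrite (_ : (g - 1).+1 = g) ?modnn //; lia.
by rewrite /cycle /s /= (e_sym _ v) ev0 evy e_g2 e_g1.
Qed.

(* Otherwise y = c_(g-2) is adjacent to v, and v closes a 4-cycle with
   c_(g-2), c_(g-1), c_0 while g >= 5. *)
Lemma cut_distinguished_off_cycle v x y : irreflexive e -> v \notin c ->
  (has (e v) c -> e v (nth x0 c 0)) -> e x v ->
  {in c, forall w, w != v -> (dist e v w).+1 <= dist e x w} -> y \in c ->
  [|| dist e x v != dist e y v, dist e x (nth x0 c 0) != dist e y (nth x0 c 0)
    | dist e x (nth x0 c 1) != dist e y (nth x0 c 1)].
Proof.
move=> e_irr vc v_c0 exv far_x yc.
apply: contraT => /norP [/negPn/eqP dv /norP [/negPn/eqP da /negPn/eqP db]].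
have dist1 p q : (dist e p q == 1) = e p q := dist_eq1 e_conn p q e_irr.
have eyv : e y v by rewrite -dist1 -dv dist1.
have eva : e v (nth x0 c 0) by apply: v_c0; apply/hasP; exists y; rewrite // /= e_sym.
have lt_1g : 1 < g by apply: ltnW.
have dxa : dist e x (nth x0 c 0) = 2.
  have := far_x _ (mem_nth x0 c_gt0) (nth_neq_notin vc c_gt0).
  have := @dist_triangle _ _ e_conn x v (nth x0 c 0).
  rewrite (eqP (etrans (dist1 _ _) exv)) (eqP (etrans (dist1 _ _) eva)) => le2 lt1.
  by apply/eqP; rewrite eqn_leq le2 lt1.
have dxb : 2 <= dist e x (nth x0 c 1).
  apply: leq_trans (far_x _ (mem_nth x0 lt_1g) (nth_neq_notin vc lt_1g)).
  by rewrite ltnS lt0n (dist_eq0 e_conn) eq_sym (nth_neq_notin vc lt_1g).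
have [lt_yg def_y] : index y c < g /\ nth x0 c (index y c) = y by rewrite index_mem nth_index.
have dya : cycle_dist g (index y c) 0 = 2 by rewrite -dist_c // def_y -da.
have dyb : 2 <= cycle_dist g (index y c) 1 by rewrite -dist_c // def_y -db.
have [y_g2 g5] := cycle_dist_eq2 lt_yg dya dyb.
have := girth_le4_of_off_cycle_neighbour vc eva; rewrite -y_g2 def_y e_sym eyv.
by move=> /(_ isT) /(leq_trans g5).
Qed.

Lemma cycle_connect_delete_vertex v : v = nth x0 c 0 \/ v \notin c ->
  {in c, forall y, y != v -> connect (delete_vertex e v) (nth x0 c 1) y}.
Proof.
move=> vpos y yc yv.
have [a [b [p def_c]]] : exists a b p, c = [:: a, b & p].
  by case: c c_ge3 => [|a [|b p]] // _; exists a, b, p.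
move: c_uniq c_cycle vpos yc yv; rewrite def_c /= => /andP [a_bp _] /andP [_ pb] [->|vc] yc yv.
  move: pb; rewrite rcons_path => /andP [pb _].
  apply: (path_connect (path_delete_vertex pb a_bp)).
  by move: yc; rewrite inE (negbTE yv).
have v_bpa : v \notin b :: rcons p a by apply: contra vc; rewrite !inE mem_rcons inE orbCA.
apply: (path_connect (path_delete_vertex pb v_bpa)).
by move: yc; rewrite !inE mem_rcons inE orbCA.
Qed.

Lemma cut_vertex_resolving v : irreflexive e -> cut_vertex e v ->
  v = nth x0 c 0 \/ v \notin c /\ (has (e v) c -> e v (nth x0 c 0)) ->
  exists2 W : {set T}, resolving e W & #|W| = #|T| - g + 1.
Proof.
move=> e_irr cut_v vpos; have lt_1g : 1 < g by apply: ltnW.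
have vpos' : v = nth x0 c 0 \/ v \notin c by case: vpos => [|[]]; [left | right].
have c1v : nth x0 c 1 != v.
  by case: vpos' => [-> | vc]; [rewrite nth_uniq | exact: nth_neq_notin].
have [x [exv xv not_x1]] := cut_vertex_separated_neighbour e_sym e_conn cut_v c1v.
have sep_x : {in c, forall w, w != v -> ~~ connect (delete_vertex e v) x w}.
  move=> w wc wv; apply: (contra _ not_x1) => xw; apply: connect_trans xw _.
  by rewrite delete_vertex_connect_sym //; apply: cycle_connect_delete_vertex.
have xc : x \notin c by apply/negP => xc; have := sep_x x xc xv; rewrite connect0.
have far_x : {in c, forall w, w != v -> (dist e v w).+1 <= dist e x w}.
  by move=> w wc wv; apply: dist_lt_separated xv (sep_x w wc wv).
case: vpos => [v0 | [vc v_c0]]; first by apply: cut_resolving_on_cycle xc _; rewrite -v0.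
exists (cut_resolver x (nth x0 c 0) (nth x0 c 1)); last exact: card_cut_resolver.
apply: cut_resolver_resolving => // y yc _ _.
case/or3P: (cut_distinguished_off_cycle e_irr vc v_c0 exv far_x yc) => d.
- by exists v; rewrite // in_cut_resolver eq_sym xv vc !orbT.
- by exists (nth x0 c 0); rewrite // in_cut_resolver nth_neq_notin ?eqxx.
by exists (nth x0 c 1); rewrite // in_cut_resolver nth_neq_notin ?eqxx ?orbT.
Qed.

End CycleResolving.

Lemma rot_to_vertex_or_neighbour (T : eqType) (r : rel T) (x0 v : T) (c : seq T) :
  exists n, v = nth x0 (rot n c) 0 \/ v \notin c /\ (has (r v) c -> r v (nth x0 (rot n c) 0)).
Proof.
have [vc | vc] := boolP (v \in c).
  by case: (rot_to vc) => n s rot_v; exists n; left; rewrite rot_v.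
have [/hasP [y yc rvy] | no_nb] := boolP (has (r v) c).
  by case: (rot_to yc) => n s rot_y; exists n; right; rewrite rot_y.
by exists 0; right; split => // has_nb; rewrite has_nb in no_nb.
Qed.

Lemma girth_cycle_at (T : finType) (e : rel T) (v : T) : has_cycle e ->
  exists2 c : seq T, [/\ uniq c, cycle e c, 2 < size c & size c = girth e] &
    v = nth v c 0 \/ v \notin c /\ (has (e v) c -> e v (nth v c 0)).
Proof.
move=> /girth_cycle [c [c_uniq c_cycle c_ge3 c_girth]].
have [n v_pos] := rot_to_vertex_or_neighbour e v v c.
by exists (rot n c); rewrite ?rot_uniq ?rot_cycle ?size_rot ?mem_rot ?has_rot.
Qed.

Theorem proposition2p4 (T : finType) (e : rel T) :
  simple_graph e -> connected_graph e -> has_cycle e ->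
  metric_dim e = #|T| - girth e + 2 ->
  forall v : T, ~ cut_vertex e v.
Proof.
move=> [e_sym e_irr] e_conn has_c dim_e v cut_v.
have [c [c_uniq c_cycle c_ge3 c_girth] v_pos] := girth_cycle_at v has_c.
have c_min k : cycle_of_len e k -> size c <= k by rewrite c_girth; apply: girth_le.
have [W W_res W_card] :=
  @cut_vertex_resolving T e e_sym e_conn v c c_uniq c_cycle c_ge3 c_min v e_irr cut_v v_pos.
have := metric_dim_le W_res; have := max_card (mem c).
by rewrite dim_e W_card (card_uniqP c_uniq) c_girth; lia.
Qed.
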